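(* Let $(X,d)$ be a compact metric space and $f:X\to X$ continuous. If $(x,y)\in X^2$ is a proximal pair for $f$, i.e. $\liminf_{n\to\infty}d(f^n(x),f^n(y))=0$, then every $(z,w)\in\omega((x,y),f\times f)$ lies in $CR(f)^2$ and satisfies $z\sim w$.
   Context: $\omega((x,y),f\times f)$ is the $\omega$-limit set of $(x,y)$ under $f\times f$, i.e. the set of limits of $(f^{n_j}(x),f^{n_j}(y))$ along sequences $n_j\to\infty$. A $\delta$-chain of $f$ is a finite sequence $(x_i)_{i=0}^k$, $k\ge1$, with $d(f(x_i),x_{i+1})\le\delta$; a $\delta$-cycle is a $\delta$-chain with $x_0=x_k$. $CR(f)$ is the set of points $x$ such that for every $\delta>0$ there is a $\delta$-cycle starting and ending at $x$. For $x,y\in CR(f)$, $x\sim y$ iff for every $\delta>0$ there are integers $m>0$, $N>0$ such that for every $n\ge N$ there are $\delta$-chains $(x_i)_{i=0}^{mn},(y_i)_{i=0}^{mn}$ in $CR(f)$ with $x_0=y_{mn}=x$, $x_{mn}=y_0=y$. *)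

From Stdlib Require Import Reals Lra Lia.
Open Scope R_scope.

Record MetricSpace := {
  carrier :> Type;
  dist : carrier -> carrier -> R;
  dist_nonneg : forall x y, 0 <= dist x y;
  dist_eq0 : forall x y, dist x y = 0 <-> x = y;
  dist_sym : forall x y, dist x y = dist y x;
  dist_tri : forall x y z, dist x z <= dist x y + dist y z
}.

Section Defs.
Variable X : MetricSpace.

Definition seq_converges (u : nat -> X) (l : X) : Prop :=
  forall eps, 0 < eps -> exists N, forall n, (n >= N)%nat -> dist X (u n) l < eps.

(* Compactness of a metric space (sequential compactness, equivalent for metric spaces). *)
Definition compact_space : Prop :=
  forall u : nat -> X, exists (phi : nat -> nat) (l : X),
    (forall i j, (i < j)%nat -> (phi i < phi j)%nat) /\ seq_converges (fun j => u (phi j)) l.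

Definition continuous_map (f : X -> X) : Prop :=
  forall x eps, 0 < eps -> exists delta, 0 < delta /\
    forall y, dist X x y < delta -> dist X (f x) (f y) < eps.

Fixpoint iter (f : X -> X) (n : nat) (x : X) : X :=
  match n with O => x | S k => f (iter f k x) end.

(* liminf_{n -> oo} d(f^n x, f^n y) = 0 (distances are nonnegative). *)
Definition proximal (f : X -> X) (x y : X) : Prop :=
  forall eps N, 0 < eps -> exists n, (n >= N)%nat /\ dist X (iter f n x) (iter f n y) < eps.

Definition omega_limit_pair (f : X -> X) (x y z w : X) : Prop :=
  exists nseq : nat -> nat,
    (forall i j, (i < j)%nat -> (nseq i < nseq j)%nat) /\
    seq_converges (fun j => iter f (nseq j) x) z /\
    seq_converges (fun j => iter f (nseq j) y) w.

Definition delta_chain (f : X -> X) (delta : R) (c : nat -> X) (k : nat) : Prop :=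
  (1 <= k)%nat /\ forall i, (i < k)%nat -> dist X (f (c i)) (c (S i)) <= delta.

Definition chain_recurrent (f : X -> X) (x : X) : Prop :=
  forall delta, 0 < delta -> exists (c : nat -> X) (k : nat),
    delta_chain f delta c k /\ c O = x /\ c k = x.

Definition CR_rel (f : X -> X) (x y : X) : Prop :=
  chain_recurrent f x /\ chain_recurrent f y /\
  forall delta, 0 < delta -> exists m N : nat, (m > 0)%nat /\ (N > 0)%nat /\
    forall n, (n >= N)%nat -> exists cx cy : nat -> X,
      delta_chain f delta cx (m * n) /\ delta_chain f delta cy (m * n) /\
      (forall i, (i <= m * n)%nat -> chain_recurrent f (cx i) /\ chain_recurrent f (cy i)) /\
      cx O = x /\ cy (m * n)%nat = x /\ cx (m * n)%nat = y /\ cy O = y.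

End Defs.

From Pilot Require Import Defs.
From Stdlib Require Import Reals Lra Lia Classical IndefiniteDescription.
Open Scope R_scope.

(* Every omega-limit point of an orbit is chain recurrent, and by compactness the
   orbit of any point is eventually shadowed, up to eps, by chain recurrent points
   (at positions and at their images).  Take (z,w) = lim (f^{n_j} x, f^{n_j} y),
   times s < q <= t with f^s x, f^t x near z, f^s y, f^t y near w, and
   d(f^q x, f^q y) small by proximality.  Following the orbit of x up to time q and
   that of y afterwards, and replacing each orbit point by a chain recurrent shadow,
   gives a delta-chain z -> w of length t - s inside CR(f); likewise w -> z, z -> z
   and w -> w.  Looping n - 1 times around z (resp. w) before crossing gives chains
   of every length (t - s) n. *)

Definition strictly_increasing (ns : nat -> nat) : Prop :=
  forall i j, (i < j)%nat -> (ns i < ns j)%nat.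

Lemma strictly_increasing_succ (ns : nat -> nat) :
  (forall k, (ns k < ns (S k))%nat) -> strictly_increasing ns.
Proof.
  intros Hsucc i j Hij; induction j as [|j IH]; [lia|].
  destruct (Nat.eq_dec i j) as [->|]; [apply Hsucc|].
  specialize (IH ltac:(lia)); specialize (Hsucc j); lia.
Qed.

Lemma strictly_increasing_ge (ns : nat -> nat) :
  strictly_increasing ns -> forall j, (j <= ns j)%nat.
Proof.
  intros Hns j; induction j as [|j IH]; [lia|].
  specialize (Hns j (S j) ltac:(lia)); lia.
Qed.

Lemma infinitely_often_subseq (P : nat -> Prop) :
  (forall T, exists tau, (T <= tau)%nat /\ P tau) ->
  exists ns, strictly_increasing ns /\ forall k, P (ns k).
Proof.
  intros Hinf; destruct (functional_choice _ Hinf) as [h Hh].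
  set (ns := fix ns k := match k with O => h O | S k => h (S (ns k)) end).
  exists ns; split.
  - apply strictly_increasing_succ; intro k; simpl; destruct (Hh (S (ns k))); lia.
  - intros [|k]; apply Hh.
Qed.

Section Dynamics.
Variable X : MetricSpace.
Variable f : X -> X.
Local Notation d := (Defs.dist X).

Lemma dist_refl (p : X) : d p p = 0.
Proof. exact (proj2 (Defs.dist_eq0 X p p) eq_refl). Qed.

Lemma dist_tri3 (p1 p2 p3 p4 : X) : d p1 p4 <= d p1 p2 + d p2 p3 + d p3 p4.
Proof. pose proof (Defs.dist_tri X p1 p2 p4); pose proof (Defs.dist_tri X p2 p3 p4); lra. Qed.

Definition with_ends (u v : X) (L : nat) (P : nat -> X) (i : nat) : X :=
  if Nat.eqb i 0 then u else if Nat.eqb i L then v else P i.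

Lemma delta_chain_with_ends (G P : nat -> X) (u v : X) (L : nat) (eps : R) :
  (0 < L)%nat ->
  (forall i, (i < L)%nat -> d (f (G i)) (G (S i)) <= eps) ->
  (forall i, (0 < i < L)%nat -> d (P i) (G i) <= eps /\ d (f (P i)) (f (G i)) <= eps) ->
  d (f u) (f (G O)) <= eps -> d (G L) v <= eps ->
  delta_chain X f (3 * eps) (with_ends u v L P) L.
Proof.
  intros HL HG HP Hu Hv; split; [lia|]; intros i Hi.
  eapply Rle_trans; [apply (dist_tri3 _ (f (G i)) (G (S i)))|].
  assert (Hstart : d (f (with_ends u v L P i)) (f (G i)) <= eps).
  { unfold with_ends; destruct (Nat.eqb_spec i 0) as [->|]; [exact Hu|].
    destruct (Nat.eqb_spec i L); [lia|]; apply HP; lia. }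
  assert (Hend : d (G (S i)) (with_ends u v L P (S i)) <= eps).
  { unfold with_ends; destruct (Nat.eqb_spec (S i) 0); [lia|].
    destruct (Nat.eqb_spec (S i) L) as [<-|]; [exact Hv|].
    rewrite Defs.dist_sym; apply HP; lia. }
  specialize (HG i Hi); lra.
Qed.

Definition CR_chain (delta : R) (k : nat) (p r : X) : Prop :=
  exists c, delta_chain X f delta c k /\
    (forall i, (i <= k)%nat -> chain_recurrent X f (c i)) /\ c O = p /\ c k = r.

Lemma CR_chain_cat delta k1 k2 (p q r : X) :
  CR_chain delta k1 p q -> CR_chain delta k2 q r -> CR_chain delta (k1 + k2) p r.
Proof.
  intros [c1 [[Hk1 H1] [C1 [<- E1]]]] [c2 [[Hk2 H2] [C2 [E2 <-]]]].
  exists (fun i => if Nat.leb i k1 then c1 i else c2 (i - k1)%nat).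
  split; [split|split; [|split]].
  - lia.
  - intros i Hi; destruct (Nat.leb_spec i k1), (Nat.leb_spec (S i) k1); try lia.
    + apply H1; lia.
    + replace i with k1 by lia; rewrite E1, <- E2.
      replace (S k1 - k1)%nat with 1%nat by lia; apply H2; lia.
    + replace (S i - k1)%nat with (S (i - k1)) by lia; apply H2; lia.
  - intros i Hi; destruct (Nat.leb_spec i k1); [apply C1|apply C2]; lia.
  - reflexivity.
  - destruct (Nat.leb_spec (k1 + k2) k1); [lia|]; f_equal; lia.
Qed.

Lemma CR_chain_loop delta L (p r : X) :
  CR_chain delta L p p -> CR_chain delta L p r ->
  forall n, (0 < n)%nat -> CR_chain delta (L * n) p r.
Proof.
  intros Hloop Hcross n Hn; induction n as [|n IH]; [lia|].
  destruct (Nat.eq_dec n 0) as [->|]; [rewrite Nat.mul_1_r; exact Hcross|].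
  replace (L * S n)%nat with (L + L * n)%nat by lia.
  apply CR_chain_cat with p; [exact Hloop|apply IH; lia].
Qed.

Definition splice (a b : X) (q n : nat) : X :=
  if Nat.ltb n q then iter X f n a else iter X f n b.

Lemma splice_pseudo_orbit (a b : X) (q : nat) eps :
  0 <= eps -> d (iter X f q a) (iter X f q b) <= eps ->
  forall n, d (f (splice a b q n)) (splice a b q (S n)) <= eps.
Proof.
  intros Heps Hq n; unfold splice.
  destruct (Nat.ltb_spec n q), (Nat.ltb_spec (S n) q); simpl; try lia;
    try (rewrite dist_refl; exact Heps).
  replace q with (S n) in Hq by lia; exact Hq.
Qed.

Definition CR_shadow eps (p x : X) : Prop :=
  chain_recurrent X f p /\ d p x < eps /\ d (f p) (f x) < eps.

Lemma CR_chain_across (a b u v : X) (s q t : nat) eps :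
  (s < q <= t)%nat ->
  (forall tau, (s <= tau)%nat -> exists p, CR_shadow eps p (iter X f tau a)) ->
  (forall tau, (s <= tau)%nat -> exists p, CR_shadow eps p (iter X f tau b)) ->
  chain_recurrent X f u -> chain_recurrent X f v ->
  d (f u) (iter X f (S s) a) < eps -> d (iter X f t b) v < eps ->
  d (iter X f q a) (iter X f q b) < eps ->
  CR_chain (3 * eps) (t - s) u v.
Proof.
  intros Hsqt Ha Hb Hu Hv Hstart Hend Hq.
  assert (Heps : 0 <= eps) by (pose proof (Defs.dist_nonneg X (iter X f q a) (iter X f q b)); lra).
  set (G := fun i => splice a b q (s + i)).
  assert (Hshadow : forall i, exists p, (0 < i < t - s)%nat -> CR_shadow eps p (G i)).
  { intro i; unfold G, splice; destruct (Nat.ltb (s + i) q);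
      [destruct (Ha (s + i)%nat) as [p Hp]|destruct (Hb (s + i)%nat) as [p Hp]];
      try lia; exists p; intros _; exact Hp. }
  destruct (functional_choice _ Hshadow) as [P HP].
  exists (with_ends u v (t - s) P); split; [|split; [|split]].
  - apply (delta_chain_with_ends G).
    + lia.
    + intros i _; unfold G; rewrite Nat.add_succ_r.
      apply splice_pseudo_orbit; lra.
    + intros i Hi; destruct (HP i Hi) as [_ [H1 H2]]; lra.
    + unfold G, splice; rewrite Nat.add_0_r.
      destruct (Nat.ltb_spec s q); [|lia]; apply Rlt_le; exact Hstart.
    + unfold G, splice; replace (s + (t - s))%nat with t by lia.
      destruct (Nat.ltb_spec t q); [lia|]; lra.
  - intros i Hi; unfold with_ends.
    destruct (Nat.eqb_spec i 0); [exact Hu|].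
    destruct (Nat.eqb_spec i (t - s)); [exact Hv|]; apply HP; lia.
  - reflexivity.
  - unfold with_ends; destruct (Nat.eqb_spec (t - s) 0); [lia|].
    rewrite Nat.eqb_refl; reflexivity.
Qed.

Hypothesis hf : continuous_map X f.

Lemma converges_map (u : nat -> X) (l : X) :
  seq_converges X u l -> seq_converges X (fun j => f (u j)) (f l).
Proof.
  intros Hu eps Heps; destruct (hf l eps Heps) as [eta [Heta Hcont]].
  destruct (Hu eta Heta) as [N HN]; exists N; intros n Hn.
  rewrite Defs.dist_sym; apply Hcont; rewrite Defs.dist_sym; auto.
Qed.

Lemma omega_limit_chain_recurrent (a l : X) (ns : nat -> nat) :
  strictly_increasing ns -> seq_converges X (fun j => iter X f (ns j) a) l ->
  chain_recurrent X f l.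
Proof.
  intros Hns Hl delta Hdelta; set (eps := delta / 3).
  assert (Heps : 0 < eps) by (unfold eps; lra).
  destruct (Hl eps Heps) as [J1 HJ1], (converges_map _ _ Hl eps Heps) as [J2 HJ2].
  set (s := ns (max J1 J2)); set (t := ns (S (max J1 J2))).
  assert (Hst : (s < t)%nat) by (apply Hns; lia).
  assert (Hfs : d (f (iter X f s a)) (f l) < eps) by (apply HJ2; lia).
  assert (Ht : d (iter X f t a) l < eps) by (apply HJ1; lia).
  set (G := fun i => iter X f (s + i) a).
  exists (with_ends l l (t - s) G), (t - s)%nat; split; [|split].
  - replace delta with (3 * eps) by (unfold eps; field).
    apply (delta_chain_with_ends G); try lia.
    + intros i _; unfold G; rewrite Nat.add_succ_r; simpl; rewrite dist_refl; lra.
    + intros i _; rewrite !dist_refl; lra.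
    + unfold G; rewrite Nat.add_0_r, Defs.dist_sym; lra.
    + unfold G; replace (s + (t - s))%nat with t by lia; lra.
  - reflexivity.
  - unfold with_ends; destruct (Nat.eqb_spec (t - s) 0); [lia|].
    rewrite Nat.eqb_refl; reflexivity.
Qed.

Lemma omega_limit_times (x y z w : X) eps (T : nat) :
  omega_limit_pair X f x y z w -> 0 < eps ->
  exists t, (T <= t)%nat /\ d (iter X f t x) z < eps /\ d (iter X f t y) w < eps /\
    d (f z) (iter X f (S t) x) < eps /\ d (f w) (iter X f (S t) y) < eps.
Proof.
  intros [ns [Hns [Hz Hw]]] Heps.
  destruct (Hz eps Heps) as [N1 H1], (Hw eps Heps) as [N2 H2].
  destruct (converges_map _ _ Hz eps Heps) as [N3 H3].
  destruct (converges_map _ _ Hw eps Heps) as [N4 H4].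
  set (j := max (max T N1) (max N2 (max N3 N4))).
  exists (ns j); split; [pose proof (strictly_increasing_ge ns Hns j); lia|].
  split; [apply H1; lia|split; [apply H2; lia|]].
  split; rewrite Defs.dist_sym; [apply H3|apply H4]; lia.
Qed.

Hypothesis hX : compact_space X.

Lemma eventually_CR_shadowed (a : X) eps :
  0 < eps -> exists T, forall tau, (T <= tau)%nat ->
    exists p, CR_shadow eps p (iter X f tau a).
Proof.
  intros Heps; apply NNPP; intro Hnever.
  assert (Hbad : forall T, exists tau, (T <= tau)%nat /\
            ~ exists p, CR_shadow eps p (iter X f tau a)).
  { intro T; apply NNPP; intro Hall; apply Hnever; exists T; intros tau Htau.
    apply NNPP; intro Hno; apply Hall; exists tau; auto. }
  destruct (infinitely_often_subseq _ Hbad) as [ns [Hns Hnot]].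
  destruct (hX (fun k => iter X f (ns k) a)) as [phi [l [Hphi Hl]]].
  assert (Hcr : chain_recurrent X f l).
  { apply (omega_limit_chain_recurrent a l (fun j => ns (phi j))); auto.
    intros i j Hij; apply Hns, Hphi, Hij. }
  destruct (Hl eps Heps) as [N1 H1], (converges_map _ _ Hl eps Heps) as [N2 H2].
  apply (Hnot (phi (max N1 N2))); exists l; split; [exact Hcr|].
  split; rewrite Defs.dist_sym; [apply H1|apply H2]; lia.
Qed.

End Dynamics.

Theorem lemmaA1 (X : MetricSpace) (f : X -> X)
  (hX : compact_space X) (hf : continuous_map X f) (x y : X)
  (hprox : proximal X f x y) :
  forall z w : X, omega_limit_pair X f x y z w ->
    chain_recurrent X f z /\ chain_recurrent X f w /\ CR_rel X f z w.
Proof.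
  intros z w Hzw; pose proof Hzw as [ns [Hns [Hz Hw]]].
  pose proof (omega_limit_chain_recurrent X f hf x z ns Hns Hz) as CRz.
  pose proof (omega_limit_chain_recurrent X f hf y w ns Hns Hw) as CRw.
  do 2 (split; [assumption|split; [assumption|]]).
  intros delta Hdelta; set (eps := delta / 3).
  assert (Heps : 0 < eps) by (unfold eps; lra).
  replace delta with (3 * eps) by (unfold eps; field).
  destruct (eventually_CR_shadowed X f hf hX x eps Heps) as [Tx Hx].
  destruct (eventually_CR_shadowed X f hf hX y eps Heps) as [Ty Hy].
  destruct (omega_limit_times X f hf x y z w eps (max Tx Ty) Hzw Heps)
    as [s [Hs [_ [_ [Hfz Hfw]]]]].
  destruct (hprox eps (S s) Heps) as [q [Hq Hxy]].
  destruct (omega_limit_times X f hf x y z w eps q Hzw Heps) as [t [Ht [Htz [Htw _]]]].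
  assert (Hxs : forall tau, (s <= tau)%nat -> exists p, CR_shadow X f eps p (iter X f tau x))
    by (intros; apply Hx; lia).
  assert (Hys : forall tau, (s <= tau)%nat -> exists p, CR_shadow X f eps p (iter X f tau y))
    by (intros; apply Hy; lia).
  assert (Hsqt : (s < q <= t)%nat) by lia.
  assert (Hrefl : forall p : X, Defs.dist X p p < eps) by (intros; rewrite dist_refl; lra).
  pose proof (CR_chain_across X f x x z z s q t eps Hsqt Hxs Hxs CRz CRz Hfz Htz (Hrefl _)) as Czz.
  pose proof (CR_chain_across X f y y w w s q t eps Hsqt Hys Hys CRw CRw Hfw Htw (Hrefl _)) as Cww.
  pose proof (CR_chain_across X f x y z w s q t eps Hsqt Hxs Hys CRz CRw Hfz Htw Hxy) as Czw.
  rewrite Defs.dist_sym in Hxy.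
  pose proof (CR_chain_across X f y x w z s q t eps Hsqt Hys Hxs CRw CRz Hfw Htz Hxy) as Cwz.
  exists (t - s)%nat, 1%nat; split; [lia|split; [lia|]]; intros n Hn.
  destruct (CR_chain_loop X f _ _ _ _ Czz Czw n ltac:(lia)) as [cx [Hcx [CRx [Ex0 Exn]]]].
  destruct (CR_chain_loop X f _ _ _ _ Cww Cwz n ltac:(lia)) as [cy [Hcy [CRy [Ey0 Eyn]]]].
  exists cx, cy; split; [exact Hcx|split; [exact Hcy|]].
  split; [intros i Hi; split; [apply CRx|apply CRy]; exact Hi|].
  repeat split; assumption.
Qed.
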